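(* Let $\kappa > 0$ and let $(X,d)$ be a complete CAT$(\kappa)$ space such that $d(v,w) < \pi/(2\sqrt{\kappa})$ for all $v,w \in X$. Let $f : X \to (-\infty,\infty]$ be a proper, convex and lower semi-continuous function which attains its minimum. Let $x_0 \in X$ and let $(\lambda_n)_{n\ge0}$ be a sequence of positive real numbers with $\sum_{n \ge 0}\lambda_n = \infty$. Define the sequence $(x_n)$ by \[ x_{n+1} = J_{\lambda_n}(x_n) = \operatorname{argmin}_{y \in X}\left[f(y) + \frac{1}{\lambda_n}\Psi_{x_n}(y)\right], \quad n \ge 0. \] Then $(x_n)$ $\Delta$-converges to a minimum point of $f$.
   Context: A geodesic space is a metric space in which any two points are joined by a geodesic segment; the point at distance $t\,d(x,y)$ from $x$ on such a segment is written $(1-t)x+ty$. A CAT$(\kappa)$ space ($\kappa>0$) is a metric space in which any two points at distance $<\pi/\sqrt{\kappa}$ are joined by a geodesic and every geodesic triangle of perimeter $<2\pi/\sqrt{\kappa}$ satisfies the CAT$(\kappa)$ comparison inequality with respect to its comparison triangle in the sphere of constant curvature $\kappa$. A function $f : X \to (-\infty,\infty]$ is proper if it is not identically $\infty$, and convex if $f((1-t)x+ty) \le (1-t)f(x)+tf(y)$ for all $x,y\in X$, $t\in[0,1]$. For $x \in X$, $\Psi_x : X \to [0,\infty)$ is defined by $\Psi_x(y) = \frac{1}{\kappa\cos(\sqrt{\kappa}\,d(y,x))} - \frac{\cos(\sqrt{\kappa}\,d(y,x))}{\kappa}$; for $\lambda>0$ the resolvent $J_\lambda(x) = \operatorname{argmin}_{y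 \in X}[f(y) + \frac{1}{\lambda}\Psi_x(y)]$ exists and is unique under the stated assumptions. $\Delta$-convergence: for a bounded sequence $(u_n)$ and $u \in X$ put $r(u,(u_n)) = \limsup_n d(u,u_n)$; the asymptotic radius is $r((u_n)) = \inf_{u\in X} r(u,(u_n))$ and the asymptotic center is $A((u_n)) = \{u \in X : r(u,(u_n)) = r((u_n))\}$. The sequence $(u_n)$ $\Delta$-converges to $u$ if $u$ is the unique point of the asymptotic center of every subsequence of $(u_n)$. *)

From Stdlib Require Import Reals Lra.
From Coquelicot Require Import Coquelicot.
Open Scope R_scope.

Definition is_metric {X : Type} (d : X -> X -> R) : Prop :=
  (forall x y, 0 <= d x y) /\
  (forall x y, d x y = 0 <-> x = y) /\
  (forall x y, d x y = d y x) /\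
  (forall x y z, d x z <= d x y + d y z).

Definition metric_complete {X : Type} (d : X -> X -> R) : Prop :=
  forall u : nat -> X,
    (forall eps, 0 < eps -> exists N, forall m n, (N <= m)%nat -> (N <= n)%nat ->
       d (u m) (u n) < eps) ->
    exists l, forall eps, 0 < eps -> exists N, forall n, (N <= n)%nat -> d (u n) l < eps.

(** A geodesic from x to y: an isometric map [0, d x y] -> X with endpoints x, y
    (represented as a function on R whose values off the interval are irrelevant).
    The point (1-t)x+ty of such a geodesic is g (t * d x y). *)
Definition geodesic {X : Type} (d : X -> X -> R) (x y : X) (g : R -> X) : Prop :=
  g 0 = x /\ g (d x y) = y /\
  forall s t, 0 <= s <= d x y -> 0 <= t <= d x y -> d (g s) (g t) = Rabs (s - t).

(** The model space M_kappa (kappa > 0): the sphere of radius 1/sqrt kappa in R^3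
    with its intrinsic (great-circle) distance. *)
Definition dot3 (u v : R * R * R) : R :=
  let '(u1, u2, u3) := u in let '(v1, v2, v3) := v in u1 * v1 + u2 * v2 + u3 * v3.

Definition Mk (kappa : R) : Type := { v : R * R * R | dot3 v v = / kappa }.

Definition dMk (kappa : R) (p q : Mk kappa) : R :=
  / sqrt kappa * acos (kappa * dot3 (proj1_sig p) (proj1_sig q)).

Inductive side := S1 | S2 | S3.

Definition CAT (kappa : R) {X : Type} (d : X -> X -> R) : Prop :=
  is_metric d /\
  (forall x y, d x y < PI / sqrt kappa -> exists g, geodesic d x y g) /\
  (forall (x y z : X) (g1 g2 g3 : R -> X),
     geodesic d x y g1 -> geodesic d y z g2 -> geodesic d z x g3 ->
     d x y + d y z + d z x < 2 * PI / sqrt kappa ->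
     forall (x' y' z' : Mk kappa) (h1 h2 h3 : R -> Mk kappa),
       dMk kappa x' y' = d x y -> dMk kappa y' z' = d y z -> dMk kappa z' x' = d z x ->
       geodesic (dMk kappa) x' y' h1 -> geodesic (dMk kappa) y' z' h2 ->
       geodesic (dMk kappa) z' x' h3 ->
       let G := fun i => match i with S1 => g1 | S2 => g2 | S3 => g3 end in
       let H := fun i => match i with S1 => h1 | S2 => h2 | S3 => h3 end in
       let L := fun i => match i with S1 => d x y | S2 => d y z | S3 => d z x end in
       forall (i j : side) (s t : R), 0 <= s <= L i -> 0 <= t <= L j ->
         d (G i s) (G j t) <= dMk kappa (H i s) (H j t)).

(** Functions X -> (-oo, +oo], as Rbar-valued functions never equal to -oo. *)
Definition proper_fun {X : Type} (f : X -> Rbar) : Prop :=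
  (forall x, f x <> m_infty) /\ (exists x, f x <> p_infty).

Definition convex_fun {X : Type} (d : X -> X -> R) (f : X -> Rbar) : Prop :=
  forall x y g t, geodesic d x y g -> 0 <= t <= 1 ->
    Rbar_le (f (g (t * d x y)))
            (Rbar_plus (Rbar_mult (1 - t) (f x)) (Rbar_mult t (f y))).

Definition lsc {X : Type} (d : X -> X -> R) (f : X -> Rbar) : Prop :=
  forall x (a : R), Rbar_lt a (f x) ->
    exists delta, 0 < delta /\ forall y, d y x < delta -> Rbar_lt a (f y).

Definition is_min_point {X : Type} (f : X -> Rbar) (z : X) : Prop :=
  forall y, Rbar_le (f z) (f y).

Definition Psi (kappa : R) {X : Type} (d : X -> X -> R) (x y : X) : R :=
  / (kappa * cos (sqrt kappa * d y x)) - cos (sqrt kappa * d y x) / kappa.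

Definition bounded_seq {X : Type} (d : X -> X -> R) (u : nat -> X) : Prop :=
  exists p M, forall n, d p (u n) <= M.

Definition asymp_r {X : Type} (d : X -> X -> R) (v : X) (u : nat -> X) : Rbar :=
  LimSup_seq (fun n => d v (u n)).

Definition asymp_radius {X : Type} (d : X -> X -> R) (u : nat -> X) : Rbar :=
  Glb_Rbar (fun r => exists v, asymp_r d v u = Finite r).

Definition asymp_center {X : Type} (d : X -> X -> R) (u : nat -> X) (v : X) : Prop :=
  asymp_r d v u = asymp_radius d u.

Definition Delta_converges {X : Type} (d : X -> X -> R) (u : nat -> X) (l : X) : Prop :=
  bounded_seq d u /\
  forall phi : nat -> nat, (forall n, (phi n < phi (S n))%nat) ->
    forall v, asymp_center d (fun n => u (phi n)) v <-> v = l.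

From Stdlib Require Import Reals Lra Psatz Lia ProofIrrelevance ClassicalEpsilon.
From Coquelicot Require Import Coquelicot.
Open Scope R_scope.

(* Since the diameter is below [PI / (2 sqrt k)], comparison with the sphere makes
   [cos (sqrt k d(., q))] concave along geodesics in a quantitative way. At a minimiser [z] this
   shows that a proximal step does not increase [d(z, x_n)] (Fejér monotonicity) and bounds
   [lam_n (f x_(n+1) - min f)] by the increment of [cos (sqrt k d(z, x_n))]; summing, with
   [sum lam_n = oo], gives [f x_n -> min f]. Asymptotic radii satisfy the same concavity, so
   asymptotic centres exist and are unique. The centre of a subsequence lies in every sublevel
   set [{f <= min f + eps}] (compare it with its projection onto that closed convex set), hence
   minimises [f]; and by Fejér monotonicity all subsequences have the same asymptotic radius at
   minimisers, so they all share the centre of the whole sequence. *)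

Lemma Rdiv_le_0_compat a b : 0 <= a -> 0 < b -> 0 <= a / b.
Proof. intros; apply Rmult_le_pos; [|apply Rlt_le, Rinv_0_lt_compat]; auto. Qed.

Lemma sin_le_id x : 0 <= x -> sin x <= x.
Proof.
  intros Hx; destruct (Req_dec x 0) as [->|]; [rewrite sin_0; lra|].
  left; apply sin_lt_x; lra.
Qed.

Lemma third_le_sin x : 0 <= x -> x <= PI / 2 -> x / 3 <= sin x.
Proof.
  intros H1 H2; assert (H3 := PI_4).
  destruct (SIN x H1 ltac:(lra)) as [H _].
  unfold sin_lb, sin_approx, sin_term in H; simpl in H.
  eapply Rle_trans; [|exact H].
  match goal with |- _ <= ?e =>
    replace e with (x - x^3/6 + x^5/120 - x^7/5040) by field end.
  assert (0 <= x^2 <= 4) by nra.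
  assert (0 <= x^5 * (1/120 - x^2/5040)) by (apply Rmult_le_pos; [apply pow_le|]; lra).
  nra.
Qed.

Lemma one_sub_cos_le_sin_sqr u : 0 <= cos u -> 1 - cos u <= sin u ^ 2.
Proof.
  intros H; assert (Hs := sin2_cos2 u); unfold Rsqr in Hs.
  assert (cos u <= 1) by apply COS_bound. nra.
Qed.

Lemma sqr_div_18_le_one_sub_cos x : 0 <= x <= PI -> x ^ 2 / 18 <= 1 - cos x.
Proof.
  intros Hx; replace x with (2 * (x / 2)) at 2 by field.
  rewrite cos_2a_sin; assert (H := third_le_sin (x / 2) ltac:(lra) ltac:(lra)). nra.
Qed.

Lemma cos_sub_le s t : 0 <= s <= t -> cos s - cos t <= t - s.
Proof.
  intros Hst; destruct (Rle_dec ((t - s) / 2) PI) as [Hl|Hl].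
  - rewrite form2.
    assert (A := sin_le_id ((t - s) / 2) ltac:(lra)).
    assert (A2 : 0 <= sin ((t - s) / 2)) by (apply sin_ge_0; lra).
    replace ((s - t) / 2) with (- ((t - s) / 2)) by field; rewrite sin_neg.
    assert (C := SIN_bound ((s + t) / 2)). nra.
  - assert (H5 := COS_bound s); assert (H6 := COS_bound t); assert (Hp := PI2_1). lra.
Qed.

Lemma sin_add_le x y : 0 <= x <= PI -> 0 <= y <= PI -> sin (x + y) <= sin x + sin y.
Proof.
  intros Hx Hy; rewrite sin_plus.
  assert (0 <= sin x) by (apply sin_ge_0; lra); assert (0 <= sin y) by (apply sin_ge_0; lra).
  assert (H1 := COS_bound x); assert (H2 := COS_bound y). nra.
Qed.

Lemma le_of_forall_le_add_mul A B C :
  0 <= C -> (forall t, 0 < t <= 1 -> A <= B + t * C) -> A <= B.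
Proof.
  intros HC H; apply Rnot_lt_le; intros HBA.
  set (t := (A - B) / ((A - B) + C)).
  assert (Ht : t * ((A - B) + C) = A - B) by (unfold t; field; lra).
  assert (0 < t <= 1).
  { split; [apply Rdiv_lt_0_compat; lra|].
    apply Rmult_le_reg_r with ((A - B) + C); [lra|]. rewrite Ht; lra. }
  specialize (H t ltac:(assumption)). nra.
Qed.

(* [sin (t th) ~ t th] while [1 - cos (t th) = O(t^2)]: let [t -> 0]. *)
Lemma nonpos_of_sin_mul_le_one_sub_cos th c a : 0 < th < PI / 2 -> 0 <= c ->
  (forall t, 0 < t <= 1 -> sin (t * th) * a <= sin th * c * (1 - cos (t * th))) -> a <= 0.
Proof.
  intros Hth Hc H; assert (Hst : 0 < sin th) by (apply sin_gt_0; lra).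
  apply (le_of_forall_le_add_mul a 0 (sin th * c * th)); [apply Rmult_le_pos; nra|].
  intros t Ht; specialize (H t Ht).
  assert (Hu : 0 < sin (t * th)) by (apply sin_gt_0; nra).
  assert (Hcu : 0 <= cos (t * th)) by (apply cos_ge_0; nra).
  assert (E1 := one_sub_cos_le_sin_sqr (t * th) Hcu).
  assert (E2 : sin (t * th) <= t * th) by (apply sin_le_id; nra).
  assert (sin (t * th) * a <= sin th * c * sin (t * th) ^ 2).
  { eapply Rle_trans; [exact H|]. apply Rmult_le_compat_l; [nra|lra]. }
  assert (a <= sin th * c * sin (t * th)).
  { apply (Rmult_le_reg_l (sin (t * th))); auto. nra. }
  assert (sin th * c * sin (t * th) <= sin th * c * (t * th)) by (apply Rmult_le_compat_l; nra).
  lra.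
Qed.
Definition Psi_cos (k c : R) : R := (/ c - c) / k.

Lemma Psi_cos_sub k c L : 0 < k -> 0 < c -> 0 < L ->
  Psi_cos k L - Psi_cos k c = (c - L) * (1 + / (L * c)) / k.
Proof. intros; unfold Psi_cos; field; lra. Qed.

Lemma Psi_cos_le k x y : 0 < k -> 0 < x <= y -> Psi_cos k y <= Psi_cos k x.
Proof.
  intros Hk Hxy; unfold Psi_cos, Rdiv.
  apply Rmult_le_compat_r; [apply Rlt_le, Rinv_0_lt_compat; auto|].
  assert (/ y <= / x) by (apply Rinv_le_contravar; lra). lra.
Qed.

(* The spherical law of cosines bounds [cos] of the distance from a point to the point at
   parameter [t] of a geodesic of angular length [th] from below by this interpolation of
   the cosines [c], [b] at its endpoints. *)
Definition cos_interp (th c b t : R) : R := (sin ((1 - t) * th) * c + sin (t * th) * b) / sin th.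

Lemma cos_interp_ge_min th c b t : 0 < th < PI / 2 -> 0 < c -> 0 < b -> 0 < t <= 1 ->
  Rmin b c <= cos_interp th c b t.
Proof.
  intros Hth Hc Hb Ht; assert (Hst : 0 < sin th) by (apply sin_gt_0; lra).
  assert (S1 : 0 <= sin ((1 - t) * th)) by (apply sin_ge_0; nra).
  assert (S2 : 0 <= sin (t * th)) by (apply sin_ge_0; nra).
  assert (S3 := sin_add_le ((1 - t) * th) (t * th) ltac:(nra) ltac:(nra)).
  replace ((1 - t) * th + t * th) with th in S3 by ring.
  assert (Rmin b c <= b) by apply Rmin_l; assert (Rmin b c <= c) by apply Rmin_r.
  assert (0 < Rmin b c) by (apply Rmin_glb_lt; lra).
  apply (Rmult_le_reg_r (sin th)); auto. unfold cos_interp, Rdiv.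
  rewrite Rmult_assoc, Rinv_l, Rmult_1_r by lra. nra.
Qed.

Section ProximalEstimate.

Variables (k th c b D : R).
Hypotheses (Hk : 0 < k) (Hth : 0 < th < PI / 2) (Hc : 0 < c <= 1) (Hb : 0 < b <= 1)
  (HD : 0 <= D).
Hypothesis Hstep : forall t, 0 < t <= 1 ->
  t * D <= Psi_cos k (cos_interp th c b t) - Psi_cos k c.

Let a := b - cos th * c.

Lemma cos_interp_eq t : cos_interp th c b t = c * cos (t * th) + a * sin (t * th) / sin th.
Proof.
  assert (0 < sin th) by (apply sin_gt_0; lra).
  unfold cos_interp, a; replace ((1 - t) * th) with (th - t * th) by ring.
  rewrite sin_minus; field; lra.
Qed.

Lemma cos_interp_le t : 0 < t <= 1 -> cos_interp th c b t <= c.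
Proof.
  intros Ht; assert (HL := cos_interp_ge_min th c b t Hth ltac:(lra) ltac:(lra) Ht).
  assert (Hmin : 0 < Rmin b c) by (apply Rmin_glb_lt; lra).
  assert (H := Hstep t Ht); rewrite Psi_cos_sub in H by lra.
  set (L := cos_interp th c b t) in *.
  assert (0 < / (L * c)) by (apply Rinv_0_lt_compat; nra).
  apply Rnot_lt_le; intros HcL.
  assert ((c - L) * (1 + / (L * c)) / k < 0); [|nra].
  unfold Rdiv; apply Rmult_neg_pos; [nra|apply Rinv_0_lt_compat; lra].
Qed.

Lemma proximal_cos_le : b <= cos th * c.
Proof.
  cut (a <= 0); [unfold a; lra|].
  apply (nonpos_of_sin_mul_le_one_sub_cos th c a Hth ltac:(lra)); intros t Ht.
  assert (Hst : 0 < sin th) by (apply sin_gt_0; lra).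
  assert (H := cos_interp_le t Ht); rewrite cos_interp_eq in H.
  apply (Rmult_le_reg_r (/ sin th)); [apply Rinv_0_lt_compat; auto|].
  replace (sin th * c * (1 - cos (t * th)) * / sin th) with (c * (1 - cos (t * th)))
    by (field; lra).
  unfold Rdiv in H; lra.
Qed.

Let M := 1 + / (b * c).

Lemma proximal_gap_bound t : 0 < t <= 1 ->
  D * k <= (- a) * th / sin th * M + t * (c * th ^ 2 * M).
Proof.
  intros Ht; assert (Hst : 0 < sin th) by (apply sin_gt_0; lra).
  assert (Ha : a <= 0) by (assert (H := proximal_cos_le); unfold a; lra).
  assert (Hbc : b <= c) by (assert (H := proximal_cos_le); assert (H1 := COS_bound th); nra).
  assert (HL := cos_interp_ge_min th c b t Hth ltac:(lra) ltac:(lra) Ht).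
  rewrite Rmin_left in HL by lra.
  assert (H := Hstep t Ht); rewrite Psi_cos_sub in H by lra.
  rewrite cos_interp_eq in H, HL.
  set (L := c * cos (t * th) + a * sin (t * th) / sin th) in *.
  assert (HML : 1 + / (L * c) <= M).
  { unfold M; assert (/ (L * c) <= / (b * c)) by (apply Rinv_le_contravar; nra). lra. }
  assert (Hu : 0 < sin (t * th)) by (apply sin_gt_0; nra).
  assert (Hcu : 0 <= cos (t * th)) by (apply cos_ge_0; nra).
  assert (E1 := one_sub_cos_le_sin_sqr (t * th) Hcu).
  assert (E2 : sin (t * th) <= t * th) by (apply sin_le_id; nra).
  assert (Hcl : c - L = c * (1 - cos (t * th)) + (- a) * sin (t * th) / sin th)
    by (unfold L; field; lra).
  assert (P1 : 0 <= c * (1 - cos (t * th))) by (assert (Hcb := COS_bound (t * th)); nra).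
  assert (P2 : 0 <= (- a) * sin (t * th) / sin th) by (apply Rdiv_le_0_compat; nra).
  assert (Q1 : c * (1 - cos (t * th)) <= c * (t * th) ^ 2).
  { apply Rmult_le_compat_l; [lra|]. nra. }
  assert (Q2 : (- a) * sin (t * th) / sin th <= (- a) * (t * th) / sin th).
  { unfold Rdiv; apply Rmult_le_compat_r; [apply Rlt_le, Rinv_0_lt_compat; auto|]. nra. }
  assert (Hk1 : t * D * k <= (c - L) * (1 + / (L * c))).
  { apply (Rmult_le_reg_r (/ k)); [apply Rinv_0_lt_compat; auto|].
    replace (t * D * k * / k) with (t * D) by (field; lra). exact H. }
  assert (Hk2 : t * D * k <= (c * (t * th) ^ 2 + (- a) * (t * th) / sin th) * M).
  { eapply Rle_trans; [exact Hk1|]. rewrite Hcl.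
    apply Rmult_le_compat; try lra. assert (0 < / (L * c)) by (apply Rinv_0_lt_compat; nra). lra. }
  apply (Rmult_le_reg_l t); [lra|].
  replace (t * ((- a) * th / sin th * M + t * (c * th ^ 2 * M)))
    with ((c * (t * th) ^ 2 + (- a) * (t * th) / sin th) * M) by (field; lra).
  lra.
Qed.

Lemma proximal_gap_le : D <= 3 * (1 + / (b * b)) / k * (cos th - b).
Proof.
  assert (Hst : 0 < sin th) by (apply sin_gt_0; lra).
  assert (Hcth : 0 <= cos th) by (apply cos_ge_0; lra).
  assert (Ha : a <= 0) by (assert (H := proximal_cos_le); unfold a; lra).
  assert (Hbc : b <= c) by (assert (H := proximal_cos_le); assert (H1 := COS_bound th); nra).
  assert (HM : 0 < M) by (unfold M; assert (0 < / (b * c)) by (apply Rinv_0_lt_compat; nra); lra).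
  assert (Hlim : D * k <= (- a) * th / sin th * M).
  { apply (le_of_forall_le_add_mul _ _ (c * th ^ 2 * M)); [|exact proximal_gap_bound].
    apply Rmult_le_pos; [apply Rmult_le_pos|]; nra. }
  assert (Hs3 := third_le_sin th ltac:(lra) ltac:(lra)).
  assert (th / sin th <= 3).
  { apply (Rmult_le_reg_r (sin th)); auto. unfold Rdiv; rewrite Rmult_assoc, Rinv_l by lra. lra. }
  assert (M <= 1 + / (b * b)).
  { unfold M; assert (/ (b * c) <= / (b * b)) by (apply Rinv_le_contravar; nra). lra. }
  assert (Hna : - a <= cos th - b) by (unfold a; nra).
  apply (Rmult_le_reg_r k); auto.
  replace (3 * (1 + / (b * b)) / k * (cos th - b) * k) with (3 * (1 + / (b * b)) * (cos th - b))
    by (field; lra).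
  eapply Rle_trans; [exact Hlim|].
  replace ((- a) * th / sin th * M) with ((th / sin th) * M * (- a)) by (field; lra).
  assert (0 <= th / sin th) by (apply Rdiv_le_0_compat; lra).
  apply Rmult_le_compat; [nra|lra|apply Rmult_le_compat; lra|lra].
Qed.

End ProximalEstimate.

Definition vcomb (a : R) (u : R * R * R) (b : R) (v : R * R * R) : R * R * R :=
  let '(u1, u2, u3) := u in let '(v1, v2, v3) := v in
  (a * u1 + b * v1, a * u2 + b * v2, a * u3 + b * v3).

Lemma dot3C u v : dot3 u v = dot3 v u.
Proof. destruct u as [[u1 u2] u3], v as [[v1 v2] v3]; simpl; ring. Qed.

Lemma dot3_vcombl a u b v w : dot3 (vcomb a u b v) w = a * dot3 u w + b * dot3 v w.
Proof. destruct u as [[u1 u2] u3], v as [[v1 v2] v3], w as [[w1 w2] w3]; simpl; ring. Qed.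

Lemma dot3_vcombr a u b v w : dot3 w (vcomb a u b v) = a * dot3 w u + b * dot3 w v.
Proof. destruct u as [[u1 u2] u3], v as [[v1 v2] v3], w as [[w1 w2] w3]; simpl; ring. Qed.

Lemma dot3_Cauchy_Schwarz u v : dot3 u v ^ 2 <= dot3 u u * dot3 v v.
Proof.
  destruct u as [[u1 u2] u3], v as [[v1 v2] v3]; simpl.
  assert (0 <= (u1 * v2 - u2 * v1) ^ 2 + (u1 * v3 - u3 * v1) ^ 2 + (u2 * v3 - u3 * v2) ^ 2)
    by (repeat apply Rplus_le_le_0_compat; apply pow2_ge_0).
  nra.
Qed.

Lemma spherical_triangle_cos_bounds A B C :
  0 <= A < PI / 2 -> 0 <= B < PI / 2 -> 0 <= C < PI / 2 ->
  B <= A + C -> A <= B + C -> C <= A + B ->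
  cos A * cos C - sin A * sin C <= cos B <= cos A * cos C + sin A * sin C.
Proof.
  intros HA HB HC T1 T2 T3; rewrite <- cos_plus, <- cos_minus; split.
  - apply cos_decr_1; lra.
  - destruct (Rle_dec C A); [apply cos_decr_1; lra|].
    rewrite <- (cos_neg (A - C)); apply cos_decr_1; lra.
Qed.

Section Sphere.

Variable k : R.
Hypothesis Hk : 0 < k.

Lemma Mk_val_inj (P Q : Mk k) : proj1_sig P = proj1_sig Q -> P = Q.
Proof. destruct P, Q; simpl; intros ->; f_equal; apply proof_irrelevance. Qed.

Lemma Mk_cos_bound (p q : R * R * R) : dot3 p p = / k -> dot3 q q = / k ->
  -1 <= k * dot3 p q <= 1.
Proof.
  intros Hp Hq; assert (H := dot3_Cauchy_Schwarz p q); rewrite Hp, Hq in H.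
  assert ((k * dot3 p q) ^ 2 <= 1).
  { replace ((k * dot3 p q) ^ 2) with (k * k * dot3 p q ^ 2) by ring.
    replace 1 with (k * k * (/ k * / k)) by (field; lra). apply Rmult_le_compat_l; nra. }
  nra.
Qed.

Lemma sqrt_mul_dMk (P Q : Mk k) :
  sqrt k * dMk k P Q = acos (k * dot3 (proj1_sig P) (proj1_sig Q)).
Proof. unfold dMk; assert (H := sqrt_lt_R0 k Hk); field; lra. Qed.

Lemma dMk_of_cos (P Q : Mk k) a : 0 <= a <= PI ->
  k * dot3 (proj1_sig P) (proj1_sig Q) = cos a -> dMk k P Q = a / sqrt k.
Proof.
  intros Ha E; unfold dMk; rewrite E, acos_cos by lra.
  field; apply Rgt_not_eq, sqrt_lt_R0; lra.
Qed.

Lemma acos_cos_abs y : Rabs y <= PI -> acos (cos y) = Rabs y.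
Proof.
  intros H; destruct (Rle_dec 0 y).
  - rewrite Rabs_right in * by lra; apply acos_cos; lra.
  - rewrite Rabs_left in * by lra; rewrite <- cos_neg; apply acos_cos; lra.
Qed.

(* [W] completes [p] to an orthonormal frame of the great circle through [p] and [q]. *)
Lemma Mk_frame (p q : R * R * R) : dot3 p p = / k -> dot3 q q = / k ->
  0 < acos (k * dot3 p q) < PI ->
  let al := acos (k * dot3 p q) in
  let W := vcomb (- cos al / sin al) p (1 / sin al) q in
  dot3 p W = 0 /\ dot3 W W = / k /\ q = vcomb (cos al) p (sin al) W.
Proof.
  intros Hp Hq Ha al W.
  assert (Hc : cos al = k * dot3 p q) by (apply cos_acos, Mk_cos_bound; auto).
  assert (Hsa : 0 < sin al) by (apply sin_gt_0; unfold al; lra).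
  assert (Hsc := sin2_cos2 al); unfold Rsqr in Hsc.
  assert (Epq : dot3 p q = cos al / k) by (rewrite Hc; field; lra).
  split; [|split].
  - unfold W; rewrite dot3_vcombr, Hp, Epq; field; lra.
  - unfold W; rewrite dot3_vcombl, !dot3_vcombr, Hp, Hq, (dot3C q p), Epq.
    transitivity ((1 - cos al * cos al) / (sin al * sin al) / k); [field; lra|].
    replace (1 - cos al * cos al) with (sin al * sin al) by lra; field; lra.
  - unfold W; destruct p as [[p1 p2] p3], q as [[q1 q2] q3]; simpl.
    f_equal; [f_equal|]; field; lra.
Qed.

Lemma Mk_slerp (P Q : Mk k) :
  0 < acos (k * dot3 (proj1_sig P) (proj1_sig Q)) < PI ->
  exists h : R -> Mk k, geodesic (dMk k) P Q h /\
   forall s (z : R * R * R), k * dot3 (proj1_sig (h s)) z =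
     cos (sqrt k * s) * (k * dot3 (proj1_sig P) z) +
     sin (sqrt k * s) * (k * dot3 (proj1_sig Q) z
        - k * dot3 (proj1_sig P) (proj1_sig Q) * (k * dot3 (proj1_sig P) z))
       / sin (acos (k * dot3 (proj1_sig P) (proj1_sig Q))).
Proof.
  destruct P as [p Hp], Q as [q Hq]; simpl; intros Ha.
  destruct (Mk_frame p q Hp Hq Ha) as [HpW [HWW Eq]].
  set (al := acos (k * dot3 p q)) in *.
  set (W := vcomb (- cos al / sin al) p (1 / sin al) q) in *.
  assert (Hsk := sqrt_lt_R0 k Hk).
  assert (Hc : cos al = k * dot3 p q) by (apply cos_acos, Mk_cos_bound; auto).
  assert (Hsa : 0 < sin al) by (apply sin_gt_0; lra).
  set (v := fun s => vcomb (cos (sqrt k * s)) p (sin (sqrt k * s)) W).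
  assert (Hvv : forall s t, dot3 (v s) (v t) = cos (sqrt k * s - sqrt k * t) / k).
  { intros s t; unfold v; rewrite dot3_vcombl, !dot3_vcombr, Hp, HWW, HpW, (dot3C W p), HpW.
    rewrite cos_minus; field; lra. }
  assert (Hv : forall s, dot3 (v s) (v s) = / k).
  { intros s; rewrite Hvv, Rminus_diag, cos_0; field; lra. }
  assert (Hd : sqrt k * dMk k (exist _ p Hp) (exist _ q Hq) = al) by apply sqrt_mul_dMk.
  exists (fun s => exist _ (v s) (Hv s)); split; [split; [|split]|].
  - apply Mk_val_inj; simpl; unfold v; rewrite Rmult_0_r, cos_0, sin_0.
    destruct p as [[p1 p2] p3], W as [[w1 w2] w3]; simpl; f_equal; [f_equal|]; ring.
  - apply Mk_val_inj; simpl; unfold v; rewrite Hd; symmetry; exact Eq.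
  - intros s t Hs Ht; unfold dMk; simpl; rewrite Hvv.
    replace (k * (cos (sqrt k * s - sqrt k * t) / k)) with (cos (sqrt k * (s - t)))
      by (replace (sqrt k * (s - t)) with (sqrt k * s - sqrt k * t) by ring; field; lra).
    assert (Rabs (s - t) <= dMk k (exist _ p Hp) (exist _ q Hq)) by (apply Rabs_le; lra).
    rewrite acos_cos_abs, Rabs_mult, (Rabs_right (sqrt k)) by
      (try rewrite Rabs_mult, (Rabs_right (sqrt k)); nra).
    field; lra.
  - intros s z; simpl; unfold v; rewrite Eq at 1; rewrite <- Hc.
    rewrite !dot3_vcombl; field; lra.
Qed.

Lemma Mk_eq_of_cos_eq1 (P Q : Mk k) : k * dot3 (proj1_sig P) (proj1_sig Q) = 1 -> P = Q.
Proof.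
  intros H1; apply Mk_val_inj.
  destruct P as [[[p1 p2] p3] Hp], Q as [[[q1 q2] q3] Hq]; simpl in *.
  assert (E : (p1 - q1) ^ 2 + (p2 - q2) ^ 2 + (p3 - q3) ^ 2 = 0).
  { replace ((p1 - q1) ^ 2 + (p2 - q2) ^ 2 + (p3 - q3) ^ 2) with
      ((p1 * p1 + p2 * p2 + p3 * p3) + (q1 * q1 + q2 * q2 + q3 * q3)
       - 2 * (p1 * q1 + p2 * q2 + p3 * q3)) by ring.
    rewrite Hp, Hq; replace (p1 * q1 + p2 * q2 + p3 * q3) with (/ k)
      by (apply (Rmult_eq_reg_l k); [rewrite H1; field|]; lra).
    ring. }
  assert (S1 := pow2_ge_0 (p1 - q1)); assert (S2 := pow2_ge_0 (p2 - q2));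
    assert (S3 := pow2_ge_0 (p3 - q3)).
  assert (E1 : p1 - q1 = 0) by (apply Rsqr_0_uniq; rewrite Rsqr_pow2; lra).
  assert (E2 : p2 - q2 = 0) by (apply Rsqr_0_uniq; rewrite Rsqr_pow2; lra).
  assert (E3 : p3 - q3 = 0) by (apply Rsqr_0_uniq; rewrite Rsqr_pow2; lra).
  replace q1 with p1 by lra; replace q2 with p2 by lra; replace q3 with p3 by lra; reflexivity.
Qed.

Lemma Mk_geodesic_exists (P Q : Mk k) : dMk k P Q < PI / sqrt k -> exists h, geodesic (dMk k) P Q h.
Proof.
  intros Hd; assert (Hsk := sqrt_lt_R0 k Hk).
  set (c := k * dot3 (proj1_sig P) (proj1_sig Q)).
  assert (Ha : acos c < PI).
  { unfold c; rewrite <- sqrt_mul_dMk. apply (Rmult_lt_compat_l (sqrt k)) in Hd; auto.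
    replace (sqrt k * (PI / sqrt k)) with PI in Hd by (field; lra). lra. }
  destruct (Rlt_dec 0 (acos c)) as [Hp|Hp].
  - destruct (Mk_slerp P Q ltac:(fold c; lra)) as [h [Hh _]]; eauto.
  - assert (H0 : acos c = 0) by (assert (Hb := acos_bound c); lra).
    assert (HPQ : P = Q).
    { apply Mk_eq_of_cos_eq1; fold c; rewrite <- (cos_acos c), H0, cos_0; [reflexivity|].
      destruct P, Q; apply Mk_cos_bound; auto. }
    subst Q; exists (fun _ => P); split; [|split]; auto.
    assert (Hz : dMk k P P = 0)
      by (apply (Rmult_eq_reg_l (sqrt k)); [rewrite sqrt_mul_dMk; fold c|]; lra).
    intros s t Hs Ht; rewrite Hz in *; replace (s - t) with 0 by lra; rewrite Rabs_R0; auto.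
Qed.

(* Comparison triangle with side angles [A], [B], [C]: place [x'] on the first axis, [y'] in
   the first coordinate plane, and [z'] at the angle [acos cp] to that plane. *)
Lemma Mk_triangle_exists (A B C : R) :
  0 <= A < PI / 2 -> 0 <= B < PI / 2 -> 0 <= C < PI / 2 ->
  B <= A + C -> A <= B + C -> C <= A + B ->
  exists x' y' z' : Mk k,
    k * dot3 (proj1_sig x') (proj1_sig y') = cos A /\
    k * dot3 (proj1_sig y') (proj1_sig z') = cos B /\
    k * dot3 (proj1_sig z') (proj1_sig x') = cos C.
Proof.
  intros HA HB HC T1 T2 T3; assert (Hsk := sqrt_lt_R0 k Hk).
  set (r := / sqrt k).
  assert (Hr : r * r = / k) by (unfold r; rewrite <- Rinv_mult, sqrt_sqrt; lra).
  assert (Hkr : k * (r * r) = 1) by (rewrite Hr; field; lra).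
  assert (HsA := sin2_cos2 A); assert (HsC := sin2_cos2 C); unfold Rsqr in HsA, HsC.
  assert (HsAC : 0 <= sin A * sin C)
    by (apply Rmult_le_pos; apply sin_ge_0; lra).
  assert (Hcos := spherical_triangle_cos_bounds A B C HA HB HC T1 T2 T3).
  set (cp := if Req_EM_T (sin A * sin C) 0 then 1
             else (cos B - cos A * cos C) / (sin A * sin C)).
  assert (Hcp : -1 <= cp <= 1).
  { unfold cp; destruct (Req_EM_T (sin A * sin C) 0) as [E|E]; [lra|].
    split; apply (Rmult_le_reg_r (sin A * sin C)); try lra;
      unfold Rdiv; rewrite Rmult_assoc, Rinv_l by lra; lra. }
  set (sp := sqrt (1 - cp * cp)).
  assert (Hsp : sp * sp = 1 - cp * cp) by (apply sqrt_sqrt; nra).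
  assert (Hx : dot3 (r, 0, 0) (r, 0, 0) = / k) by (simpl; rewrite <- Hr; ring).
  assert (Hy : dot3 (r * cos A, r * sin A, 0) (r * cos A, r * sin A, 0) = / k)
    by (simpl; rewrite <- Hr; transitivity (r * r * (sin A * sin A + cos A * cos A));
        [ring|rewrite HsA; ring]).
  assert (Hz : dot3 (r * cos C, r * sin C * cp, r * sin C * sp)
                    (r * cos C, r * sin C * cp, r * sin C * sp) = / k).
  { simpl; rewrite <- Hr.
    transitivity (r * r * (sin C * sin C * (cp * cp + sp * sp) + cos C * cos C)); [ring|].
    rewrite Hsp; replace (cp * cp + (1 - cp * cp)) with 1 by ring. rewrite Rmult_1_r, HsC; ring. }
  exists (exist (fun v => dot3 v v = / k) _ Hx), (exist (fun v => dot3 v v = / k) _ Hy),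
    (exist (fun v => dot3 v v = / k) _ Hz); simpl; split; [|split].
  - transitivity (k * (r * r) * cos A); [ring|rewrite Hkr; ring].
  - transitivity (k * (r * r) * (cos A * cos C + sin A * sin C * cp)); [ring|rewrite Hkr, Rmult_1_l].
    unfold cp; destruct (Req_EM_T (sin A * sin C) 0) as [E|E]; [lra|].
    field; split; intro Z; apply E; rewrite Z; ring.
  - transitivity (k * (r * r) * cos C); [ring|rewrite Hkr; ring].
Qed.

End Sphere.

Lemma proper_fun_finite {X : Type} (f : X -> Rbar) y r : proper_fun f ->
  Rbar_le (f y) (Finite r) -> f y = Finite (real (f y)).
Proof.
  intros [Hm _] H; destruct (f y) eqn:E; auto; [simpl in H; tauto|exfalso; apply (Hm y); auto].
Qed.

Lemma min_point_finite {X : Type} (f : X -> Rbar) z : proper_fun f -> is_min_point f z ->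
  f z = Finite (real (f z)).
Proof.
  intros Hf Hz; destruct Hf as [Hm [y Hy]]; specialize (Hz y).
  destruct (f z) eqn:E; auto; [destruct (f y); simpl in Hz; tauto|exfalso; apply (Hm z); auto].
Qed.

Lemma is_LimSup_seq_ub (a : nat -> R) L : is_LimSup_seq a (Finite L) ->
  forall eps, 0 < eps -> exists N, forall n, (N <= n)%nat -> a n < L + eps.
Proof. intros H eps He; exact (proj2 (H (mkposreal eps He))). Qed.

Lemma is_LimSup_seq_frequently (a : nat -> R) L : is_LimSup_seq a (Finite L) ->
  forall eps, 0 < eps -> forall N, exists n, (N <= n)%nat /\ L - eps < a n.
Proof. intros H eps He; exact (proj1 (H (mkposreal eps He))). Qed.

Lemma is_LimSup_seq_le (a : nat -> R) L M : is_LimSup_seq a (Finite L) ->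
  (forall eps, 0 < eps -> exists N, forall n, (N <= n)%nat -> a n <= M + eps) -> L <= M.
Proof.
  intros H HM; apply Rnot_lt_le; intros Hlt.
  destruct (HM ((L - M) / 2) ltac:(lra)) as [N HN].
  destruct (is_LimSup_seq_frequently a L H ((L - M) / 2) ltac:(lra) N) as [n [Hn1 Hn2]].
  specialize (HN n Hn1); lra.
Qed.

Lemma is_LimSup_seq_ge (a : nat -> R) L M : is_LimSup_seq a (Finite L) ->
  (forall eps, 0 < eps -> forall N, exists n, (N <= n)%nat /\ M - eps <= a n) -> M <= L.
Proof.
  intros H HM; apply Rnot_lt_le; intros Hlt.
  destruct (is_LimSup_seq_ub a L H ((M - L) / 2) ltac:(lra)) as [N HN].
  destruct (HM ((M - L) / 2) ltac:(lra) N) as [n [Hn1 Hn2]]. specialize (HN n Hn1); lra.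
Qed.

Lemma LimSup_seq_bounded (a : nat -> R) B : (forall n, 0 <= a n <= B) ->
  is_LimSup_seq a (Finite (real (LimSup_seq a))) /\ LimSup_seq a = Finite (real (LimSup_seq a)).
Proof.
  intros Hb; destruct (ex_LimSup_seq a) as [l Hl]; rewrite (is_LimSup_seq_unique _ _ Hl).
  destruct l as [l| |]; simpl in *; auto.
  - destruct (Hl (B + 1) 0%nat) as [n [_ Hn]]; specialize (Hb n); lra.
  - destruct (Hl (-1)) as [N HN]; specialize (HN N (Nat.le_refl _)); specialize (Hb N); lra.
Qed.

Lemma strict_mono_ge_id (phi : nat -> nat) : (forall n, (phi n < phi (S n))%nat) ->
  forall n, (n <= phi n)%nat.
Proof. intros H n; induction n; [lia|]; specialize (H n); lia. Qed.

Lemma is_LimSup_seq_subseq_antitone (a : nat -> R) L phi :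
  (forall i j, (i <= j)%nat -> a j <= a i) -> (forall n, (phi n < phi (S n))%nat) ->
  is_LimSup_seq a (Finite L) -> forall L', is_LimSup_seq (fun n => a (phi n)) (Finite L') -> L' = L.
Proof.
  intros Hm Hp HL L' HL'; apply Rle_antisym.
  - apply (is_LimSup_seq_le _ _ _ HL'); intros eps He.
    destruct (is_LimSup_seq_ub a L HL eps He) as [N HN].
    exists N; intros n Hn; assert (Hf := strict_mono_ge_id phi Hp n). left; apply HN; lia.
  - apply (is_LimSup_seq_ge _ _ _ HL'); intros eps He N; exists N; split; [lia|].
    destruct (is_LimSup_seq_frequently a L HL eps He (phi N)) as [j [Hj1 Hj2]].
    assert (a j <= a (phi N)) by (apply Hm; auto). lra.
Qed.

Lemma exists_inf_ge0 {X : Type} (T : X -> Prop) (h : X -> R) :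
  (forall w, T w -> 0 <= h w) -> (exists a, T a) ->
  exists rho, 0 <= rho /\ (forall w, T w -> rho <= h w) /\
    forall eps, 0 < eps -> exists w, T w /\ h w < rho + eps.
Proof.
  intros Hbd [a0 Ta0]; set (E := fun r => exists w, T w /\ r = - h w).
  destruct (completeness E) as [s [Hs1 Hs2]].
  { exists 0; intros r [w [Tw ->]]; specialize (Hbd w Tw); lra. }
  { exists (- h a0), a0; auto. }
  exists (- s); split; [|split].
  - assert (s <= 0); [|lra]. apply Hs2; intros r [v [Tv ->]]; specialize (Hbd v Tv); lra.
  - intros w Tw; assert (- h w <= s) by (apply Hs1; exists w; auto). lra.
  - intros eps He; apply not_all_not_ex; intros Hn.
    assert (s <= s - eps); [|lra]. apply Hs2; intros r [w [Tw ->]].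
    specialize (Hn w); apply Rnot_lt_le; intros Hc; apply Hn; split; auto; lra.
Qed.

Section CATSpace.

Variables (k : R) (X : Type) (d : X -> X -> R).
Hypotheses (Hk : 0 < k) (Hcat : CAT k d) (Hdiam : forall v w, d v w < PI / (2 * sqrt k)).

Lemma d_ge0 v w : 0 <= d v w.
Proof. apply (proj1 (proj1 Hcat)). Qed.

Lemma d_eq0 v w : d v w = 0 -> v = w.
Proof. apply (proj1 (proj2 (proj1 Hcat))). Qed.

Lemma d_refl v : d v v = 0.
Proof. apply (proj1 (proj2 (proj1 Hcat))); reflexivity. Qed.

Lemma dC v w : d v w = d w v.
Proof. apply (proj1 (proj2 (proj2 (proj1 Hcat)))). Qed.

Lemma d_triangle u v w : d u w <= d u v + d v w.
Proof. apply (proj2 (proj2 (proj2 (proj1 Hcat)))). Qed.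

Lemma sqrt_mul_diam : sqrt k * (PI / (2 * sqrt k)) = PI / 2.
Proof. assert (H := sqrt_lt_R0 k Hk); field; lra. Qed.

Lemma angle_bounds v w : 0 <= sqrt k * d v w < PI / 2.
Proof.
  assert (Hs := sqrt_lt_R0 k Hk); assert (H := Hdiam v w); assert (H0 := d_ge0 v w).
  rewrite <- sqrt_mul_diam; split; [nra|apply Rmult_lt_compat_l; auto].
Qed.

Lemma cos_angle_pos v w : 0 < cos (sqrt k * d v w) <= 1.
Proof.
  assert (H := angle_bounds v w); split; [apply cos_gt_0; lra|apply COS_bound].
Qed.

Lemma d_lt_pi v w : d v w < PI / sqrt k.
Proof.
  assert (Hs := sqrt_lt_R0 k Hk); assert (H := Hdiam v w).
  assert (PI / (2 * sqrt k) < PI / sqrt k); [|lra].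
  apply Rmult_lt_compat_l; [apply PI_RGT_0|].
  rewrite Rinv_mult; assert (0 < / sqrt k) by (apply Rinv_0_lt_compat; auto). lra.
Qed.

Lemma geodesic_exists v w : exists g, geodesic d v w g.
Proof. apply (proj1 (proj2 Hcat)), d_lt_pi. Qed.

Lemma angle_triangle u v w : sqrt k * d u w <= sqrt k * d u v + sqrt k * d v w.
Proof.
  rewrite <- Rmult_plus_distr_l; apply Rmult_le_compat_l;
    [apply Rlt_le, sqrt_lt_R0; lra|apply d_triangle].
Qed.

Lemma perimeter_lt u v w : d u v + d v w + d w u < 2 * PI / sqrt k.
Proof.
  assert (Hs := sqrt_lt_R0 k Hk).
  assert (H1 := Hdiam u v); assert (H2 := Hdiam v w); assert (H3 := Hdiam w u).
  assert (E : 2 * PI / sqrt k = 4 * (PI / (2 * sqrt k))) by (field; lra).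
  assert (0 < PI / (2 * sqrt k)) by (apply Rdiv_lt_0_compat; [apply PI_RGT_0|lra]). lra.
Qed.

(* The CAT(k) inequality for the triangle [p y q], read through the explicit slerp
   parametrisation of the comparison side [x' y']. *)
Lemma cos_geodesic_ge p y q g : geodesic d p y g -> 0 < d p y -> forall s, 0 <= s <= d p y ->
  let A := sqrt k * d p y in let B := sqrt k * d y q in let C := sqrt k * d q p in
  cos (sqrt k * s) * cos C + sin (sqrt k * s) * (cos B - cos A * cos C) / sin A
    <= cos (sqrt k * d (g s) q).
Proof.
  intros Hg Hpy s Hs A B C; assert (Hsk := sqrt_lt_R0 k Hk); assert (Hpi := PI_RGT_0).
  destruct (geodesic_exists y q) as [g2 Hg2]; destruct (geodesic_exists q p) as [g3 Hg3].
  assert (HA := angle_bounds p y); assert (HB := angle_bounds y q); assert (HC := angle_bounds q p).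
  fold A in HA; fold B in HB; fold C in HC.
  assert (HA0 : 0 < A) by (apply Rmult_lt_0_compat; lra).
  assert (T1 := angle_triangle y p q); assert (T2 := angle_triangle p q y);
    assert (T3 := angle_triangle q y p).
  rewrite (dC y p), (dC p q) in T1; rewrite (dC p q), (dC q y) in T2;
    rewrite (dC q y), (dC y p) in T3; fold A B C in T1, T2, T3.
  destruct (Mk_triangle_exists k Hk A B C) as [x' [y' [z' [E1 [E2 E3]]]]]; try lra.
  assert (D1 : dMk k x' y' = d p y)
    by (rewrite (dMk_of_cos k Hk _ _ A) by (auto; lra); unfold A; field; lra).
  assert (D2 : dMk k y' z' = d y q)
    by (rewrite (dMk_of_cos k Hk _ _ B) by (auto; lra); unfold B; field; lra).
  assert (D3 : dMk k z' x' = d q p)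
    by (rewrite (dMk_of_cos k Hk _ _ C) by (auto; lra); unfold C; field; lra).
  assert (Hacos : acos (k * dot3 (proj1_sig x') (proj1_sig y')) = A)
    by (rewrite E1; apply acos_cos; lra).
  destruct (Mk_slerp k Hk x' y') as [h1 [Hh1 Fh1]]; [rewrite Hacos; lra|].
  destruct (Mk_geodesic_exists k Hk y' z') as [h2 Hh2]; [rewrite D2; apply d_lt_pi|].
  destruct (Mk_geodesic_exists k Hk z' x') as [h3 Hh3]; [rewrite D3; apply d_lt_pi|].
  assert (Hcmp := proj2 (proj2 Hcat) p y q g g2 g3 Hg Hg2 Hg3 (perimeter_lt p y q) x' y' z' h1 h2 h3
    D1 D2 D3 Hh1 Hh2 Hh3 S1 S3 s 0 Hs ltac:(assert (H := d_ge0 q p); simpl; lra)).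
  simpl in Hcmp; rewrite (proj1 Hg3), (proj1 Hh3) in Hcmp.
  assert (Fs := Fh1 s (proj1_sig z')).
  rewrite Hacos, E1, (dot3C (proj1_sig x') (proj1_sig z')), E2, E3 in Fs.
  rewrite <- Fs; unfold dMk in Hcmp.
  set (K := k * dot3 (proj1_sig (h1 s)) (proj1_sig z')) in *.
  assert (HK : -1 <= K <= 1) by (unfold K; destruct (h1 s), z'; apply Mk_cos_bound; auto).
  apply (Rmult_le_compat_l (sqrt k)) in Hcmp; [|lra].
  replace (sqrt k * (/ sqrt k * acos K)) with (acos K) in Hcmp by (field; lra).
  rewrite <- (cos_acos K) at 1 by exact HK; assert (Hb := acos_bound K).
  assert (H0 : 0 <= sqrt k * d (g s) q) by (apply Rmult_le_pos; [lra|apply d_ge0]).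
  apply cos_decr_1; lra.
Qed.

Lemma cos_geodesic_comparison p y q g t : geodesic d p y g -> 0 < d p y -> 0 <= t <= 1 ->
  sin ((1 - t) * (sqrt k * d p y)) * cos (sqrt k * d p q)
    + sin (t * (sqrt k * d p y)) * cos (sqrt k * d y q)
  <= sin (sqrt k * d p y) * cos (sqrt k * d (g (t * d p y)) q).
Proof.
  intros Hg Hpy Ht; assert (Hsk := sqrt_lt_R0 k Hk).
  assert (Hle := cos_geodesic_ge p y q g Hg Hpy (t * d p y) ltac:(nra)); cbv zeta in Hle.
  rewrite (dC p q); set (A := sqrt k * d p y) in *.
  replace (sqrt k * (t * d p y)) with (t * A) in Hle by (unfold A; ring).
  assert (Hsa : 0 < sin A) by (apply sin_gt_0; assert (H := angle_bounds p y); unfold A; nra).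
  replace ((1 - t) * A) with (A - t * A) by ring; rewrite sin_minus.
  apply (Rmult_le_compat_l (sin A)) in Hle; [|lra].
  replace (sin A * (cos (t * A) * cos (sqrt k * d q p)
     + sin (t * A) * (cos (sqrt k * d y q) - cos A * cos (sqrt k * d q p)) / sin A))
    with ((sin A * cos (t * A) - cos A * sin (t * A)) * cos (sqrt k * d q p)
     + sin (t * A) * cos (sqrt k * d y q)) in Hle by (field; lra).
  exact Hle.
Qed.

Lemma cos_midpoint_ge a b g q : geodesic d a b g ->
  (cos (sqrt k * d a q) + cos (sqrt k * d b q)) / 2
    <= cos (sqrt k * d (g (1 / 2 * d a b)) q) * cos (sqrt k * d a b / 2).
Proof.
  intros Hg; assert (Hsk := sqrt_lt_R0 k Hk).
  destruct (Req_dec (d a b) 0) as [E|E].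
  - assert (a = b) by (apply d_eq0; auto). subst b.
    rewrite E, Rmult_0_r, (proj1 Hg); replace (sqrt k * 0 / 2) with 0 by field.
    rewrite cos_0; lra.
  - assert (Hab : 0 < d a b) by (assert (H := d_ge0 a b); lra).
    assert (Hsc := cos_geodesic_comparison a b q g (1 / 2) Hg Hab ltac:(lra)).
    set (th := sqrt k * d a b) in *; assert (Hth := angle_bounds a b); fold th in Hth.
    replace ((1 - 1 / 2) * th) with (th / 2) in Hsc by field.
    replace (1 / 2 * th) with (th / 2) in Hsc by field.
    replace th with (2 * (th / 2)) in Hsc at 3 by field; rewrite sin_2a in Hsc.
    assert (Hth0 : 0 < th) by (apply Rmult_lt_0_compat; lra).
    assert (Hs2 : 0 < sin (th / 2)) by (apply sin_gt_0; lra).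
    apply (Rmult_le_reg_l (2 * sin (th / 2))); lra.
Qed.

Lemma Psi_eq_Psi_cos u v : Psi k d u v = Psi_cos k (cos (sqrt k * d v u)).
Proof. assert (Hc := cos_angle_pos v u); unfold Psi, Psi_cos; field; lra. Qed.

Lemma Psi_ge0 u v : 0 <= Psi k d u v.
Proof.
  rewrite Psi_eq_Psi_cos; assert (Hc := cos_angle_pos v u); unfold Psi_cos.
  apply Rdiv_le_0_compat; auto.
  assert (1 <= / cos (sqrt k * d v u)) by (rewrite <- Rinv_1; apply Rinv_le_contravar; lra). lra.
Qed.

Lemma Psi_refl u : Psi k d u u = 0.
Proof. rewrite Psi_eq_Psi_cos, d_refl, Rmult_0_r, cos_0; unfold Psi_cos; field; lra. Qed.

Section ProximalPoint.

Variables (f : X -> Rbar) (lam : nat -> R) (x : nat -> X).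
Hypotheses (Hproper : proper_fun f) (Hconvex : convex_fun d f) (Hlam : forall n, 0 < lam n).
Hypothesis Hprox : forall n y,
  Rbar_le (Rbar_plus (f (x (S n))) (Finite (/ lam n * Psi k d (x n) (x (S n)))))
          (Rbar_plus (f y) (Finite (/ lam n * Psi k d (x n) y))).

Lemma proximal_finite n y : f y <> p_infty -> f (x (S n)) = Finite (real (f (x (S n)))).
Proof.
  intros Hy; assert (H := Hprox n y).
  destruct (f y) eqn:Ey; [|tauto|exfalso; apply (proj1 Hproper y); auto].
  destruct (f (x (S n))) eqn:E; auto; [simpl in H; tauto|].
  exfalso; apply (proj1 Hproper (x (S n))); auto.
Qed.

(* Comparing [x (S n)] with the points of the geodesic towards [y], by convexity of [f]. *)
Lemma proximal_interp_bound n y g t r : geodesic d (x (S n)) y g -> 0 < d (x (S n)) y ->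
  0 < t <= 1 -> f y = Finite r ->
  t * (lam n * (real (f (x (S n))) - r)) <=
    Psi_cos k (cos_interp (sqrt k * d (x (S n)) y) (cos (sqrt k * d (x (S n)) (x n)))
                 (cos (sqrt k * d y (x n))) t)
    - Psi_cos k (cos (sqrt k * d (x (S n)) (x n))).
Proof.
  intros Hg Hpy Ht Hy; set (p := x (S n)) in *; assert (Hsk := sqrt_lt_R0 k Hk).
  assert (Hp : f p = Finite (real (f p))) by (apply (proximal_finite n y); rewrite Hy; discriminate).
  set (w := g (t * d p y)).
  assert (Hw := Hprox n w); assert (Hcw := Hconvex p y g t Hg ltac:(lra)); fold w in Hcw.
  rewrite Hp, Hy in Hcw; simpl in Hcw.
  destruct (f w) as [fw| |] eqn:Ew; [|simpl in Hcw; tauto|exfalso; apply (proj1 Hproper w); auto].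
  simpl in Hcw; fold p in Hw; rewrite Hp in Hw; simpl in Hw; rewrite !Psi_eq_Psi_cos in Hw.
  set (th := sqrt k * d p y).
  assert (Hth : 0 < th < PI / 2) by (assert (H := angle_bounds p y); unfold th; nra).
  assert (Hst : 0 < sin th) by (apply sin_gt_0; lra).
  assert (Hc := cos_angle_pos p (x n)); assert (Hb := cos_angle_pos y (x n)).
  assert (Hsc := cos_geodesic_comparison p y (x n) g t Hg Hpy ltac:(lra)); fold th w in Hsc.
  assert (HLp := cos_interp_ge_min th _ _ t Hth (proj1 Hc) (proj1 Hb) Ht).
  assert (0 < Rmin (cos (sqrt k * d y (x n))) (cos (sqrt k * d p (x n))))
    by (apply Rmin_glb_lt; lra).
  assert (HLw : cos_interp th (cos (sqrt k * d p (x n))) (cos (sqrt k * d y (x n))) t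
                <= cos (sqrt k * d w (x n))).
  { apply (Rmult_le_reg_r (sin th)); auto. unfold cos_interp, Rdiv.
    rewrite Rmult_assoc, Rinv_l, Rmult_1_r by lra. lra. }
  assert (Hpsi := Psi_cos_le k _ _ Hk (conj (Rlt_le_trans _ _ _ ltac:(eassumption) HLp) HLw)).
  assert (Hln := Hlam n).
  assert (E1 : t * (real (f p) - r) <= / lam n * (Psi_cos k (cos (sqrt k * d w (x n)))
                                         - Psi_cos k (cos (sqrt k * d p (x n)))))
    by (rewrite Rmult_minus_distr_l; nra).
  apply (Rmult_le_compat_l (lam n)) in E1; [|lra].
  rewrite <- (Rmult_assoc (lam n) (/ lam n)), Rinv_r, Rmult_1_l in E1 by lra. lra.
Qed.

Lemma proximal_fejer z n : is_min_point f z ->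
  cos (sqrt k * d z (x n)) <= cos (sqrt k * d z (x (S n))) /\
  lam n * (real (f (x (S n))) - real (f z)) <=
    3 * (1 + / (cos (sqrt k * d z (x n)) * cos (sqrt k * d z (x n)))) / k *
      (cos (sqrt k * d z (x (S n))) - cos (sqrt k * d z (x n))).
Proof.
  intros Hz; assert (Hfz := min_point_finite f z Hproper Hz); assert (Hsk := sqrt_lt_R0 k Hk).
  assert (Hfp : f (x (S n)) = Finite (real (f (x (S n)))))
    by (apply (proximal_finite n z); rewrite Hfz; discriminate).
  set (p := x (S n)) in *; set (b := cos (sqrt k * d z (x n))).
  assert (Hb := cos_angle_pos z (x n)); fold b in Hb.
  assert (Hmfp : real (f z) <= real (f p)) by (specialize (Hz p); rewrite Hfz, Hfp in Hz; exact Hz).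
  assert (HK0 : 0 <= 3 * (1 + / (b * b)) / k).
  { apply Rdiv_le_0_compat; auto. assert (0 < / (b * b)) by (apply Rinv_0_lt_compat; nra). lra. }
  destruct (Req_dec (d p z) 0) as [E0|E0].
  - apply d_eq0 in E0; rewrite E0, Rminus_diag, Rmult_0_r, d_refl, Rmult_0_r, cos_0.
    split; [lra|apply Rmult_le_pos; lra].
  - assert (Hpz : 0 < d p z) by (assert (H := d_ge0 p z); lra).
    destruct (geodesic_exists p z) as [g Hg].
    assert (Hth : 0 < sqrt k * d p z < PI / 2) by (assert (H := angle_bounds p z); nra).
    assert (Hc := cos_angle_pos p (x n)).
    assert (HD : 0 <= lam n * (real (f p) - real (f z)))
      by (apply Rmult_le_pos; [apply Rlt_le, Hlam|lra]).
    assert (Hstep := fun t Ht => proximal_interp_bound n z g t (real (f z)) Hg Hpz Ht Hfz).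
    assert (K1 := proximal_cos_le k _ _ _ _ Hk Hth Hc Hb HD Hstep).
    assert (K2 := proximal_gap_le k _ _ _ _ Hk Hth Hc Hb HD Hstep).
    rewrite (dC p z) in K1, K2.
    assert (0 <= cos (sqrt k * d z p)) by (apply cos_ge_0; assert (H := angle_bounds z p); lra).
    split; [nra|exact K2].
Qed.

Lemma dist_min_point_le_succ z n : is_min_point f z -> d z (x (S n)) <= d z (x n).
Proof.
  intros Hz; destruct (proximal_fejer z n Hz) as [H1 _]; assert (Hsk := sqrt_lt_R0 k Hk).
  assert (R1 := angle_bounds z (x n)); assert (R2 := angle_bounds z (x (S n))).
  apply (Rmult_le_reg_l (sqrt k)); auto. apply cos_decr_0; lra.
Qed.

Lemma dist_min_point_antitone z : is_min_point f z -> forall i j, (i <= j)%nat ->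
  d z (x j) <= d z (x i).
Proof.
  intros Hz i j Hij; induction Hij; [lra|].
  eapply Rle_trans; [apply dist_min_point_le_succ|]; auto.
Qed.

Lemma proximal_value_le_succ n y : f y <> p_infty ->
  real (f (x (S (S n)))) <= real (f (x (S n))).
Proof.
  intros Hy; assert (H := Hprox (S n) (x (S n))).
  rewrite (proximal_finite n y Hy), (proximal_finite (S n) y Hy), Psi_refl in H; simpl in H.
  assert (0 <= / lam (S n) * Psi k d (x (S n)) (x (S (S n)))).
  { apply Rmult_le_pos; [apply Rlt_le, Rinv_0_lt_compat, Hlam|apply Psi_ge0]. }
  lra.
Qed.

Lemma proximal_value_antitone y : f y <> p_infty -> forall i j, (i <= j)%nat ->
  real (f (x (S j))) <= real (f (x (S i))).
Proof.
  intros Hy i j Hij; induction Hij; [lra|].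
  eapply Rle_trans; [apply (proximal_value_le_succ _ y Hy)|auto].
Qed.

(* Telescoping the value bound of [proximal_fejer]. *)
Lemma proximal_weighted_gap_sum_le z N : is_min_point f z ->
  sum_f_R0 (fun n => lam n * (real (f (x (S n))) - real (f z))) N
    <= 3 * (1 + / (cos (sqrt k * d z (x 0%nat)) * cos (sqrt k * d z (x 0%nat)))) / k.
Proof.
  intros Hz; set (c := fun n => cos (sqrt k * d z (x n))).
  change (cos (sqrt k * d z (x 0%nat))) with (c 0%nat).
  assert (Hsk := sqrt_lt_R0 k Hk).
  assert (Hc : forall n, 0 < c n <= 1) by (intros; apply cos_angle_pos).
  assert (Hc0 : forall n, c 0%nat <= c n).
  { intros n; unfold c; assert (H0 := angle_bounds z (x 0%nat)); assert (Hn := angle_bounds z (x n)).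
    apply cos_decr_1; try lra. apply Rmult_le_compat_l; [lra|].
    apply dist_min_point_antitone; auto; lia. }
  set (K := 3 * (1 + / (c 0%nat * c 0%nat)) / k).
  assert (HK0 : 0 < K).
  { assert (H0 := Hc 0%nat). unfold K; apply Rdiv_lt_0_compat; auto.
    assert (0 < / (c 0%nat * c 0%nat)) by (apply Rinv_0_lt_compat; nra). lra. }
  assert (Hstep : forall n, lam n * (real (f (x (S n))) - real (f z)) <= K * (c (S n) - c n)).
  { intros n; destruct (proximal_fejer z n Hz) as [A B]; fold (c n) (c (S n)) in A, B.
    eapply Rle_trans; [exact B|]. apply Rmult_le_compat_r; [lra|].
    unfold K, Rdiv; apply Rmult_le_compat_r; [apply Rlt_le, Rinv_0_lt_compat; auto|].
    apply Rmult_le_compat_l; [lra|]. apply Rplus_le_compat_l.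
    assert (H0 := Hc 0%nat); assert (Hn := Hc0 n). apply Rinv_le_contravar; nra. }
  assert (Hsum : sum_f_R0 (fun n => lam n * (real (f (x (S n))) - real (f z))) N
                 <= K * (c (S N) - c 0%nat)).
  { induction N; simpl; [apply Hstep|]. specialize (Hstep (S N)). lra. }
  assert (H0 := Hc 0%nat); assert (HN := Hc (S N)). nra.
Qed.

Lemma proximal_value_converges z : is_min_point f z -> is_lim_seq (sum_n lam) p_infty ->
  forall eps, 0 < eps -> exists N, forall n, (N <= n)%nat ->
    Rbar_le (f (x n)) (Finite (real (f z) + eps)).
Proof.
  intros Hz Hlim eps Heps.
  assert (Hfz := min_point_finite f z Hproper Hz).
  assert (Hzfin : f z <> p_infty) by (rewrite Hfz; discriminate).
  set (e := fun n => real (f (x (S n))) - real (f z)).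
  set (K := 3 * (1 + / (cos (sqrt k * d z (x 0%nat)) * cos (sqrt k * d z (x 0%nat)))) / k).
  apply is_lim_seq_spec in Hlim; destruct (Hlim (K / eps)) as [N HN].
  specialize (HN N (Nat.le_refl N)); rewrite sum_n_Reals in HN.
  assert (HeN : e N <= eps).
  { apply Rnot_lt_le; intros Hlt.
    assert (G : sum_f_R0 (fun n => lam n * eps) N <= sum_f_R0 (fun n => lam n * e n) N).
    { apply sum_Rle; intros n Hn; apply Rmult_le_compat_l; [apply Rlt_le, Hlam|].
      assert (e N <= e n) by (unfold e; apply Rplus_le_compat_r, (proximal_value_antitone z); auto).
      lra. }
    rewrite <- scal_sum in G.
    assert (Hs : sum_f_R0 (fun n => lam n * e n) N <= K)
      by exact (proximal_weighted_gap_sum_le z N Hz).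
    apply (Rmult_lt_compat_l eps) in HN; auto.
    replace (eps * (K / eps)) with K in HN by (field; lra). lra. }
  exists (S N); intros n Hn; destruct n as [|n]; [lia|].
  rewrite (proximal_finite n z Hzfin); simpl.
  assert (e n <= e N) by (unfold e; apply Rplus_le_compat_r, (proximal_value_antitone z); auto; lia).
  unfold e in *; lra.
Qed.

End ProximalPoint.

Definition asymp_r_real (u : nat -> X) (v : X) : R := real (asymp_r d v u).

Lemma asymp_r_real_spec u v :
  is_LimSup_seq (fun n => d v (u n)) (Finite (asymp_r_real u v)) /\
  asymp_r d v u = Finite (asymp_r_real u v) /\ 0 <= asymp_r_real u v <= PI / (2 * sqrt k).
Proof.
  destruct (LimSup_seq_bounded (fun n => d v (u n)) (PI / (2 * sqrt k))) as [H1 H2].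
  { intros n; split; [apply d_ge0|left; apply Hdiam]. }
  unfold asymp_r_real, asymp_r; split; [|split]; auto; split.
  - apply (is_LimSup_seq_ge _ _ _ H1); intros eps He N; exists N; split; auto.
    assert (H := d_ge0 v (u N)); lra.
  - apply (is_LimSup_seq_le _ _ _ H1); intros eps He; exists 0%nat; intros n _.
    assert (H := Hdiam v (u n)); lra.
Qed.

Lemma asymp_r_real_lip u a b : asymp_r_real u a <= d a b + asymp_r_real u b.
Proof.
  destruct (asymp_r_real_spec u a) as [Ha _]; destruct (asymp_r_real_spec u b) as [Hb _].
  apply (is_LimSup_seq_le _ _ _ Ha); intros eps He.
  destruct (is_LimSup_seq_ub _ _ Hb eps He) as [N HN].
  exists N; intros n Hn; specialize (HN n Hn); assert (Ht := d_triangle a b (u n)); lra.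
Qed.

Lemma asymp_center_iff u v : asymp_center d u v <-> forall w, asymp_r_real u v <= asymp_r_real u w.
Proof.
  unfold asymp_center, asymp_radius.
  assert (Hr : forall w, asymp_r d w u = Finite (asymp_r_real u w)) by apply asymp_r_real_spec.
  rewrite Hr; split.
  - intros E w; destruct (Glb_Rbar_correct (fun r => exists v, asymp_r d v u = Finite r)) as [Hlb _].
    rewrite <- E in Hlb; apply (Hlb (asymp_r_real u w)); exists w; auto.
  - intros Hm; symmetry; apply is_glb_Rbar_unique; split.
    + intros r [w Hw]; rewrite Hr in Hw; injection Hw as <-; apply Hm.
    + intros b Hb; apply Hb; exists v; auto.
Qed.

(* The CAT(k) counterpart of uniform convexity: a point within [R] of both ends of a geodesic
   is at most [acos (cos (sqrt k R) / cos (sqrt k d a b / 2))] away from its midpoint. *)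
Definition cos_midconvex (h : X -> R) : Prop :=
  forall a b g R, geodesic d a b g -> h a <= R -> h b <= R -> 0 <= R <= PI / (2 * sqrt k) ->
    cos (sqrt k * R) <= cos (sqrt k * h (g (1 / 2 * d a b))) * cos (sqrt k * d a b / 2).

Lemma dist_cos_midconvex c : cos_midconvex (d c).
Proof.
  intros a b g R Hg HaR HbR HR; assert (Hsk := sqrt_lt_R0 k Hk).
  assert (Hmid := cos_midpoint_ge a b g c Hg).
  rewrite (dC a c), (dC b c), (dC (g (1 / 2 * d a b)) c) in Hmid.
  assert (Hca := angle_bounds c a); assert (Hcb := angle_bounds c b).
  assert (SR : 0 <= sqrt k * R <= PI / 2)
    by (rewrite <- sqrt_mul_diam; split; [apply Rmult_le_pos|apply Rmult_le_compat_l]; lra).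
  assert (cos (sqrt k * R) <= cos (sqrt k * d c a))
    by (apply cos_decr_1; try lra; apply Rmult_le_compat_l; lra).
  assert (cos (sqrt k * R) <= cos (sqrt k * d c b))
    by (apply cos_decr_1; try lra; apply Rmult_le_compat_l; lra).
  lra.
Qed.

Lemma asymp_r_real_cos_midconvex u : cos_midconvex (asymp_r_real u).
Proof.
  intros a b g R Hg HaR HbR HR; assert (Hsk := sqrt_lt_R0 k Hk); assert (Hpi := PI_RGT_0).
  assert (HD := sqrt_mul_diam); set (Dd := PI / (2 * sqrt k)) in *.
  assert (HDp : 0 < Dd) by (unfold Dd; apply Rdiv_lt_0_compat; lra).
  set (m := g (1 / 2 * d a b)).
  destruct (asymp_r_real_spec u a) as [La _]; destruct (asymp_r_real_spec u b) as [Lb _].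
  destruct (asymp_r_real_spec u m) as [Lm [_ Bm]]; set (rm := asymp_r_real u m) in *.
  assert (Hth := angle_bounds a b); set (c2 := cos (sqrt k * d a b / 2)).
  assert (Hc2 : 0 < c2 <= 1) by (unfold c2; split; [apply cos_gt_0; lra|apply COS_bound]).
  apply Rnot_lt_le; intros Hlt.
  set (gap := cos (sqrt k * R) - cos (sqrt k * rm) * c2).
  assert (Hgap : 0 < gap) by (unfold gap; lra).
  set (eps := Rmin Dd (gap / (4 * sqrt k))).
  assert (He : 0 < eps) by (apply Rmin_glb_lt; [lra|apply Rdiv_lt_0_compat; lra]).
  assert (He1 : eps <= Dd) by apply Rmin_l; assert (He2 : eps <= gap / (4 * sqrt k)) by apply Rmin_r.
  assert (Hske : sqrt k * eps <= gap / 4).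
  { apply (Rmult_le_compat_l (sqrt k)) in He2; [|lra].
    replace (sqrt k * (gap / (4 * sqrt k))) with (gap / 4) in He2 by (field; lra). lra. }
  destruct (is_LimSup_seq_ub _ _ La eps He) as [N1 HN1].
  destruct (is_LimSup_seq_ub _ _ Lb eps He) as [N2 HN2].
  destruct (is_LimSup_seq_frequently _ _ Lm eps He (N1 + N2)%nat) as [n [Hn1 Hn2]].
  specialize (HN1 n ltac:(lia)); specialize (HN2 n ltac:(lia)); simpl in *.
  assert (Hmid := cos_midpoint_ge a b g (u n) Hg); fold m c2 in Hmid.
  assert (Ha0 := d_ge0 a (u n)); assert (Hb0 := d_ge0 b (u n)); assert (Hm0 := angle_bounds m (u n)).
  assert (A1 : cos (sqrt k * (R + eps)) <= cos (sqrt k * d a (u n))) by (apply cos_decr_1; nra).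
  assert (A2 : cos (sqrt k * (R + eps)) <= cos (sqrt k * d b (u n))) by (apply cos_decr_1; nra).
  assert (A3 : cos (sqrt k * R) - cos (sqrt k * (R + eps)) <= sqrt k * eps)
    by (assert (Hl := cos_sub_le (sqrt k * R) (sqrt k * (R + eps)) ltac:(nra)); lra).
  assert (A4 : cos (sqrt k * d m (u n)) <= cos (sqrt k * rm) + sqrt k * eps).
  { destruct (Rle_dec rm (d m (u n))).
    - assert (cos (sqrt k * d m (u n)) <= cos (sqrt k * rm)) by (apply cos_decr_1; nra). nra.
    - assert (Hl := cos_sub_le (sqrt k * d m (u n)) (sqrt k * rm) ltac:(nra)). nra. }
  assert (cos (sqrt k * d m (u n)) * c2 <= cos (sqrt k * rm) * c2 + sqrt k * eps) by nra.
  unfold gap in *; lra.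
Qed.

Lemma div_succ_le eta i j : 0 <= eta -> (i <= j)%nat -> eta / (INR j + 1) <= eta / (INR i + 1).
Proof.
  intros He Hij; assert (INR i <= INR j) by (apply le_INR; auto); assert (Hi := pos_INR i).
  apply Rmult_le_compat_l; [lra|]. apply Rinv_le_contravar; lra.
Qed.

Lemma eventually_div_succ_lt eta e : 0 < eta -> 0 < e ->
  exists N, forall n, (N <= n)%nat -> eta / (INR n + 1) < e.
Proof.
  intros He Hg; destruct (archimed_cor1 (e / eta)) as [N [HN HN0]]; [apply Rdiv_lt_0_compat; auto|].
  exists N; intros n Hn; assert (HNp : 0 < INR N) by (apply lt_0_INR; lia).
  assert (INR N <= INR n) by (apply le_INR; auto).
  apply (Rmult_lt_compat_l eta) in HN; auto; replace (eta * (e / eta)) with e in HN by (field; lra).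
  assert (eta / (INR n + 1) < eta / INR N)
    by (apply Rmult_lt_compat_l; auto; apply Rinv_lt_contravar; nra).
  unfold Rdiv in *; lra.
Qed.

Section CosMidconvexMinimization.

Variable h : X -> R.
Hypotheses (Hh : cos_midconvex h) (Hbd : forall a, 0 <= h a <= PI / (2 * sqrt k)).

Lemma near_inf_dist_bound a b g rho del : geodesic d a b g ->
  0 <= rho -> rho <= h (g (1 / 2 * d a b)) -> 0 <= del ->
  h a <= rho + del -> h b <= rho + del -> rho + del <= PI / (2 * sqrt k) ->
  cos (sqrt k * rho) * ((sqrt k * d a b / 2) ^ 2 / 18) <= sqrt k * del.
Proof.
  intros Hg Hr Hmr Hdel Ha Hb HR; assert (Hsk := sqrt_lt_R0 k Hk); assert (HD := sqrt_mul_diam).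
  assert (Hc := Hh a b g (rho + del) Hg Ha Hb ltac:(lra)).
  set (mid := g (1 / 2 * d a b)) in *; set (th := sqrt k * d a b) in *.
  assert (Hbm := Hbd mid); assert (Hth := angle_bounds a b); fold th in Hth.
  assert (HrD : sqrt k * (rho + del) <= PI / 2) by (rewrite <- HD; apply Rmult_le_compat_l; lra).
  assert (C1 : cos (sqrt k * h mid) <= cos (sqrt k * rho)) by (apply cos_decr_1; nra).
  assert (Hc2 : 0 <= cos (th / 2)) by (apply cos_ge_0; lra).
  assert (C2 : cos (sqrt k * rho) - cos (sqrt k * (rho + del)) <= sqrt k * del)
    by (assert (Hl := cos_sub_le (sqrt k * rho) (sqrt k * (rho + del)) ltac:(nra)); lra).
  assert (C3 := sqr_div_18_le_one_sub_cos (th / 2) ltac:(lra)).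
  assert (Hcr : 0 <= cos (sqrt k * rho)) by (apply cos_ge_0; nra).
  assert (cos (sqrt k * h mid) * cos (th / 2) <= cos (sqrt k * rho) * cos (th / 2))
    by (apply Rmult_le_compat_r; lra).
  assert (cos (sqrt k * rho) * ((th / 2) ^ 2 / 18) <= cos (sqrt k * rho) * (1 - cos (th / 2)))
    by (apply Rmult_le_compat_l; lra).
  replace (sqrt k * d a b / 2) with (th / 2) in Hc by (unfold th; field). lra.
Qed.

Lemma min_point_unique c1 c2 : (forall w, h c1 <= h w) -> (forall w, h c2 <= h w) ->
  h c1 < PI / (2 * sqrt k) -> c1 = c2.
Proof.
  intros H1 H2 HD1; assert (Hsk := sqrt_lt_R0 k Hk); assert (HD := sqrt_mul_diam).
  destruct (geodesic_exists c1 c2) as [g Hg].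
  assert (H21 := H2 c1); assert (Hb1 := Hbd c1).
  assert (Hb : cos (sqrt k * h c1) * ((sqrt k * d c1 c2 / 2) ^ 2 / 18) <= sqrt k * 0)
    by (apply (near_inf_dist_bound c1 c2 g); auto; lra).
  assert (Hcr : 0 < cos (sqrt k * h c1)) by (apply cos_gt_0; assert (H := Hbd c1); nra).
  assert (Hd0 := d_ge0 c1 c2); apply d_eq0.
  assert ((sqrt k * d c1 c2 / 2) ^ 2 <= 0) by nra.
  assert (sqrt k * d c1 c2 = 0) by nra. nra.
Qed.

Hypothesis Hcomp : metric_complete d.
Variable T : X -> Prop.
Hypotheses (HTmid : forall a b g, T a -> T b -> geodesic d a b g -> T (g (1 / 2 * d a b)))
  (HTclosed : forall u l, (forall n, T (u n)) ->
     (forall eps, 0 < eps -> exists N, forall n, (N <= n)%nat -> d (u n) l < eps) -> T l).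

Lemma minimizing_seq_cauchy (w : nat -> X) rho eta :
  0 <= rho -> 0 < eta -> rho + eta <= PI / (2 * sqrt k) -> (forall v, T v -> rho <= h v) ->
  (forall n, T (w n) /\ h (w n) < rho + eta / (INR n + 1)) ->
  forall eps, 0 < eps -> exists N, forall m n, (N <= m)%nat -> (N <= n)%nat -> d (w m) (w n) < eps.
Proof.
  intros Hr0 Heta HrD Hr1 Hw eps He; assert (Hsk := sqrt_lt_R0 k Hk).
  set (crho := cos (sqrt k * rho)).
  assert (Hcr : 0 < crho) by (apply cos_gt_0; assert (H := sqrt_mul_diam); nra).
  destruct (eventually_div_succ_lt eta (eps * eps * sqrt k * crho / 72) Heta) as [N HN];
    [apply Rdiv_lt_0_compat; [repeat apply Rmult_lt_0_compat|]; lra|].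
  exists N; intros m n Hm Hn; destruct (Hw m) as [Tm Hm']; destruct (Hw n) as [Tn Hn'].
  assert (Hdm := div_succ_le eta N m ltac:(lra) Hm); assert (Hdn := div_succ_le eta N n ltac:(lra) Hn).
  assert (HdN := div_succ_le eta 0 N ltac:(lra) ltac:(lia)); simpl in HdN.
  assert (HdN0 : 0 < eta / (INR N + 1)) by (apply Rdiv_lt_0_compat; assert (H := pos_INR N); lra).
  replace (eta / (0 + 1)) with eta in HdN by field.
  destruct (geodesic_exists (w m) (w n)) as [g Hg].
  assert (Hb : crho * ((sqrt k * d (w m) (w n) / 2) ^ 2 / 18) <= sqrt k * (eta / (INR N + 1)))
    by (apply (near_inf_dist_bound _ _ g); auto; lra).
  specialize (HN N (Nat.le_refl N)); assert (Hd0 := d_ge0 (w m) (w n)).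
  apply Rnot_le_lt; intros Hge.
  assert (crho * ((sqrt k * eps) ^ 2 / 72) <= crho * ((sqrt k * d (w m) (w n) / 2) ^ 2 / 18)).
  { apply Rmult_le_compat_l; [lra|].
    assert ((sqrt k * eps) ^ 2 <= (sqrt k * d (w m) (w n)) ^ 2) by (apply pow_incr; nra).
    lra. }
  apply (Rmult_lt_compat_l (sqrt k)) in HN; [|lra]. lra.
Qed.

(* [h] is 1-Lipschitz, so the limit of the Cauchy minimising sequence is a minimum point. *)
Lemma exists_min_point_on : (forall a b, h a <= d a b + h b) ->
  (exists a0, T a0 /\ h a0 < PI / (2 * sqrt k)) ->
  exists c, T c /\ forall w, T w -> h c <= h w.
Proof.
  intros Hlip [a0 [Ta0 Ha0]].
  destruct (exists_inf_ge0 T h ltac:(intros w _; apply Hbd) ltac:(eauto))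
    as [rho [Hr0 [Hr1 Hr2]]].
  assert (Hrho : rho < PI / (2 * sqrt k)) by (specialize (Hr1 a0 Ta0); lra).
  set (eta := (PI / (2 * sqrt k) - rho) / 2); assert (Heta : 0 < eta) by (unfold eta; lra).
  assert (Hex : forall n, exists w, T w /\ h w < rho + eta / (INR n + 1)).
  { intros n; apply Hr2, Rdiv_lt_0_compat; [lra|assert (H := pos_INR n); lra]. }
  destruct (choice _ Hex) as [w Hw].
  destruct (Hcomp w (minimizing_seq_cauchy w rho eta Hr0 Heta ltac:(unfold eta; lra) Hr1 Hw))
    as [l Hl].
  exists l; split; [apply (HTclosed w l); [intros; apply Hw|auto]|].
  intros v Tv; specialize (Hr1 v Tv).
  apply Rle_trans with rho; auto; apply Rnot_lt_le; intros Hc.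
  set (eps := h l - rho).
  destruct (Hl (eps / 2) ltac:(unfold eps; lra)) as [N1 HN1].
  destruct (eventually_div_succ_lt eta (eps / 2) Heta ltac:(unfold eps; lra)) as [N2 HN2].
  specialize (HN1 (N1 + N2)%nat ltac:(lia)); specialize (HN2 (N1 + N2)%nat ltac:(lia)).
  destruct (Hw (N1 + N2)%nat) as [_ Hh'].
  assert (Hli := Hlip l (w (N1 + N2)%nat)); rewrite dC in Hli; unfold eps in *; lra.
Qed.

End CosMidconvexMinimization.

(* The nearest point [P] of a convex set to [c] is closer to every point [y] of the set than
   [c] is: otherwise the geodesic from [P] to [y] would start by approaching [c]. *)
Lemma nearest_point_dist_le (T : X -> Prop) c P :
  (forall a b g t, T a -> T b -> geodesic d a b g -> 0 <= t <= 1 -> T (g (t * d a b))) ->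
  T P -> (forall w, T w -> d c P <= d c w) -> forall y, T y -> d P y <= d y c.
Proof.
  intros HT TP HP y Ty; assert (Hsk := sqrt_lt_R0 k Hk).
  destruct (Req_dec (d P y) 0) as [E|E]; [rewrite E; apply d_ge0|].
  assert (Hpy : 0 < d P y) by (assert (H := d_ge0 P y); lra).
  destruct (geodesic_exists P y) as [g Hg].
  set (th := sqrt k * d P y).
  assert (Hth : 0 < th < PI / 2) by (assert (H := angle_bounds P y); unfold th; nra).
  set (CP := cos (sqrt k * d P c)); assert (HCP := cos_angle_pos P c); fold CP in HCP.
  assert (Hst : 0 < sin th) by (apply sin_gt_0; lra).
  assert (Hcth : 0 <= cos th) by (apply cos_ge_0; lra).
  assert (Ha : cos (sqrt k * d y c) - cos th * CP <= 0).
  { apply (nonpos_of_sin_mul_le_one_sub_cos th CP _ Hth ltac:(lra)); intros t Ht.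
    assert (Hsc := cos_geodesic_comparison P y c g t Hg Hpy ltac:(lra)); fold th CP in Hsc.
    set (w := g (t * d P y)) in *.
    assert (Hw := HP w (HT P y g t TP Ty Hg ltac:(lra))).
    assert (Hwc := angle_bounds w c); assert (HPc := angle_bounds P c).
    assert (cos (sqrt k * d w c) <= CP)
      by (unfold CP; rewrite (dC w c), (dC P c) in *; apply cos_decr_1; nra).
    replace ((1 - t) * th) with (th - t * th) in Hsc by ring; rewrite sin_minus in Hsc.
    assert (sin th * cos (sqrt k * d w c) <= sin th * CP) by (apply Rmult_le_compat_l; lra).
    nra. }
  assert (cos (sqrt k * d y c) <= cos th) by nra.
  assert (Hyc := angle_bounds y c).
  assert (th <= sqrt k * d y c) by (apply cos_decr_0; lra).
  unfold th in *; apply (Rmult_le_reg_l (sqrt k)); auto.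
Qed.

Section MinimizingSequence.

Variable f : X -> Rbar.
Hypotheses (Hcomp : metric_complete d) (Hproper : proper_fun f) (Hconvex : convex_fun d f)
  (Hlsc : lsc d f).

Lemma sublevel_convex r a b g t : Rbar_le (f a) (Finite r) -> Rbar_le (f b) (Finite r) ->
  geodesic d a b g -> 0 <= t <= 1 -> Rbar_le (f (g (t * d a b))) (Finite r).
Proof.
  intros Sa Sb Hg Ht; eapply Rbar_le_trans; [apply (Hconvex a b g t Hg Ht)|].
  assert (Fa := proper_fun_finite f a r Hproper Sa); assert (Fb := proper_fun_finite f b r Hproper Sb).
  rewrite Fa, Fb in *; simpl in *; nra.
Qed.

Lemma sublevel_closed r u l : (forall n, Rbar_le (f (u n)) (Finite r)) ->
  (forall eps, 0 < eps -> exists N, forall n, (N <= n)%nat -> d (u n) l < eps) ->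
  Rbar_le (f l) (Finite r).
Proof.
  intros Hu Hul; apply Rbar_not_lt_le; intros Hlt.
  destruct (Hlsc l r Hlt) as [del [Hdel Hy]]; destruct (Hul del Hdel) as [N HN].
  exact (Rbar_lt_not_le _ _ (Hy (u N) (HN N (Nat.le_refl N))) (Hu N)).
Qed.

(* The projection of [c] onto a sublevel set containing a tail of [u] has no larger asymptotic
   radius than [c], so it is [c] by uniqueness of the asymptotic centre. *)
Lemma asymp_center_sublevel (u : nat -> X) c r :
  (exists N, forall n, (N <= n)%nat -> Rbar_le (f (u n)) (Finite r)) ->
  (forall w, asymp_r_real u c <= asymp_r_real u w) -> asymp_r_real u c < PI / (2 * sqrt k) ->
  Rbar_le (f c) (Finite r).
Proof.
  intros [N HN] Hc HcD; set (S := fun y => Rbar_le (f y) (Finite r)).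
  assert (HS : forall a b g t, S a -> S b -> geodesic d a b g -> 0 <= t <= 1 -> S (g (t * d a b)))
    by (intros; apply sublevel_convex; auto).
  destruct (exists_min_point_on (d c) (dist_cos_midconvex c)
              ltac:(intros; split; [apply d_ge0|left; apply Hdiam]) Hcomp S
              ltac:(intros a b g Sa Sb Hg; apply (HS a b g); auto; lra)
              ltac:(intros; apply (sublevel_closed r u0); auto))
    as [P [SP HP]].
  - intros a b; assert (H := d_triangle c b a); rewrite (dC b a) in H; lra.
  - exists (u N); split; [apply HN; lia|apply Hdiam].
  - assert (HrP : asymp_r_real u P <= asymp_r_real u c).
    { destruct (asymp_r_real_spec u P) as [LP _]; destruct (asymp_r_real_spec u c) as [Lc _].
      apply (is_LimSup_seq_le _ _ _ LP); intros e He.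
      destruct (is_LimSup_seq_ub _ _ Lc e He) as [N1 HN1].
      exists (N1 + N)%nat; intros n Hn; specialize (HN1 n ltac:(lia)).
      assert (Hpr := nearest_point_dist_le S c P HS SP HP (u n) (HN n ltac:(lia))).
      rewrite (dC (u n) c) in Hpr; simpl in HN1; lra. }
    replace c with P; [exact SP|].
    apply (min_point_unique (asymp_r_real u) (asymp_r_real_cos_midconvex u)); auto.
    + intros a; apply asymp_r_real_spec.
    + intros w; specialize (Hc w); lra.
    + lra.
Qed.

Lemma asymp_center_min_point z (u : nat -> X) c : is_min_point f z ->
  (forall eps, 0 < eps -> exists N, forall n, (N <= n)%nat ->
     Rbar_le (f (u n)) (Finite (real (f z) + eps))) ->
  (forall w, asymp_r_real u c <= asymp_r_real u w) -> asymp_r_real u c < PI / (2 * sqrt k) ->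
  is_min_point f c.
Proof.
  intros Hz Hu Hc HcD; assert (Fz := min_point_finite f z Hproper Hz).
  assert (Key : forall eps, 0 < eps -> Rbar_le (f c) (Finite (real (f z) + eps)))
    by (intros eps He; apply (asymp_center_sublevel u); auto).
  assert (Fc := proper_fun_finite f c _ Hproper (Key 1 ltac:(lra))).
  intros y; eapply Rbar_le_trans; [|apply (Hz y)]; rewrite Fc, Fz; simpl.
  apply Rnot_lt_le; intros Hlt.
  assert (K := Key ((real (f c) - real (f z)) / 2) ltac:(lra)); rewrite Fc in K; simpl in K; lra.
Qed.

End MinimizingSequence.

Lemma asymp_center_exists (Hcomp : metric_complete d) u a0 :
  asymp_r_real u a0 < PI / (2 * sqrt k) -> exists c, forall w, asymp_r_real u c <= asymp_r_real u w.
Proof.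
  intros Ha0.
  destruct (exists_min_point_on (asymp_r_real u) (asymp_r_real_cos_midconvex u)
              ltac:(intros; apply asymp_r_real_spec) Hcomp (fun _ => True)
              (fun _ _ _ _ _ _ => I) (fun _ _ _ _ => I) (asymp_r_real_lip u)
              (ex_intro _ a0 (conj I Ha0))) as [c [_ Hc]].
  exists c; intros w; apply Hc; auto.
Qed.

Section ProximalDelta.

Variables (f : X -> Rbar) (lam : nat -> R) (x : nat -> X) (z0 : X).
Hypotheses (Hcomp : metric_complete d) (Hproper : proper_fun f) (Hconvex : convex_fun d f)
  (Hlsc : lsc d f) (Hz0 : is_min_point f z0) (Hlam : forall n, 0 < lam n)
  (Hsum : is_lim_seq (sum_n lam) p_infty).
Hypothesis Hprox : forall n y,
  Rbar_le (Rbar_plus (f (x (S n))) (Finite (/ lam n * Psi k d (x n) (x (S n)))))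
          (Rbar_plus (f y) (Finite (/ lam n * Psi k d (x n) y))).

Section Subsequence.

Variable phi : nat -> nat.
Hypothesis Hphi : forall n, (phi n < phi (S n))%nat.

Let u := fun n => x (phi n).

Lemma subseq_asymp_r_real_min_point p : is_min_point f p -> asymp_r_real u p = asymp_r_real x p.
Proof.
  intros Hp; apply (is_LimSup_seq_subseq_antitone (fun n => d p (x n)) _ phi).
  - exact (dist_min_point_antitone f lam x Hproper Hconvex Hlam Hprox p Hp).
  - exact Hphi.
  - apply asymp_r_real_spec.
  - apply asymp_r_real_spec.
Qed.

Lemma subseq_asymp_r_real_lt : asymp_r_real u z0 < PI / (2 * sqrt k).
Proof.
  destruct (asymp_r_real_spec u z0) as [L _].
  assert (asymp_r_real u z0 <= d z0 (x 0%nat)); [|assert (Hd := Hdiam z0 (x 0%nat)); lra].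
  apply (is_LimSup_seq_le _ _ _ L); intros e He; exists 0%nat; intros n _.
  assert (Hf := dist_min_point_antitone f lam x Hproper Hconvex Hlam Hprox z0 Hz0 0 (phi n)
                  ltac:(lia)); unfold u; lra.
Qed.

Lemma subseq_asymp_center_min_point c : (forall w, asymp_r_real u c <= asymp_r_real u w) ->
  is_min_point f c.
Proof.
  intros Hc; assert (Hl := subseq_asymp_r_real_lt); assert (Hcz := Hc z0).
  apply (asymp_center_min_point f Hcomp Hproper Hconvex Hlsc z0 u c Hz0); [|exact Hc|lra].
  intros eps He.
  destruct (proximal_value_converges f lam x Hproper Hconvex Hlam Hprox z0 Hz0 Hsum eps He)
    as [N HN].
  exists N; intros n Hn; apply HN; assert (Hg := strict_mono_ge_id phi Hphi n); lia.
Qed.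

End Subsequence.

Lemma id_strict_mono : forall n, (n < S n)%nat.
Proof. lia. Qed.

(* All subsequences have the same asymptotic radius at minimum points of [f] (by Fejér
   monotonicity) and have their asymptotic centres among these points. *)
Lemma subseq_asymp_center_eq z phi : (forall n, (phi n < phi (S n))%nat) ->
  is_min_point f z -> (forall w, asymp_r_real x z <= asymp_r_real x w) ->
  forall v, asymp_center d (fun n => x (phi n)) v <-> v = z.
Proof.
  intros Hphi Hzm Hz v; set (u := fun n => x (phi n)).
  assert (Hlt := subseq_asymp_r_real_lt phi).
  destruct (asymp_center_exists Hcomp u z0 Hlt) as [c Hc].
  assert (Hcm := subseq_asymp_center_min_point phi Hphi c Hc).
  assert (Hzu : forall w, asymp_r_real u z <= asymp_r_real u w).
  { intros w; specialize (Hz c); specialize (Hc w); unfold u in *.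
    rewrite (subseq_asymp_r_real_min_point phi Hphi z Hzm).
    rewrite <- (subseq_asymp_r_real_min_point phi Hphi c Hcm) in Hz. lra. }
  rewrite asymp_center_iff; split; [|intros ->; exact Hzu].
  intros Hv; symmetry; apply (min_point_unique (asymp_r_real u) (asymp_r_real_cos_midconvex u));
    auto; [intros a; apply asymp_r_real_spec|].
  specialize (Hzu z0); unfold u in *; lra.
Qed.

Lemma proximal_Delta_converges : exists z, is_min_point f z /\ Delta_converges d x z.
Proof.
  destruct (asymp_center_exists Hcomp x z0 (subseq_asymp_r_real_lt (fun n => n))) as [z Hz].
  exists z; split; [exact (subseq_asymp_center_min_point _ id_strict_mono z Hz)|split].
  - exists z0, (PI / (2 * sqrt k)); intros n; left; apply Hdiam.
  - intros phi Hphi; apply subseq_asymp_center_eq; auto.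
    exact (subseq_asymp_center_min_point _ id_strict_mono z Hz).
Qed.

End ProximalDelta.
End CATSpace.

Theorem mainTheorem3 (kappa : R) (X : Type) (d : X -> X -> R) (f : X -> Rbar)
  (x0 : X) (lam : nat -> R) (x : nat -> X) :
  0 < kappa ->
  CAT kappa d ->
  metric_complete d ->
  (forall v w, d v w < PI / (2 * sqrt kappa)) ->
  proper_fun f -> convex_fun d f -> lsc d f ->
  (exists z, is_min_point f z) ->
  (forall n, 0 < lam n) ->
  is_lim_seq (sum_n lam) p_infty ->
  x 0%nat = x0 ->
  (forall n y,
     Rbar_le (Rbar_plus (f (x (S n))) (Finite (/ lam n * Psi kappa d (x n) (x (S n)))))
             (Rbar_plus (f y) (Finite (/ lam n * Psi kappa d (x n) y)))) ->
  exists z, is_min_point f z /\ Delta_converges d x z.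
Proof.
  intros Hk Hcat Hcomp Hdiam Hproper Hconvex Hlsc [z0 Hz0] Hlam Hsum _ Hprox.
  exact (proximal_Delta_converges kappa X d Hk Hcat Hdiam f lam x z0
           Hcomp Hproper Hconvex Hlsc Hz0 Hlam Hsum Hprox).
Qed.
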